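(* Let $\mathcal{P}$ be a profile of unrooted phylogenetic trees whose display graph $G(\mathcal{P})$ is connected, and let $F_1,F_2$ be two parallel nice minimal cuts of $G(\mathcal{P})$. Then the splits $\sigma(F_1)$ and $\sigma(F_2)$ are compatible.
   Context: A phylogenetic tree $T$ is an unrooted tree whose leaves are bijectively labeled by $\mathcal{L}(T)$ (leaves identified with labels; internal vertices have degree at least three). A profile $\mathcal{P}=\{T_1,\dots,T_k\}$ is a finite collection of phylogenetic trees, $\mathcal{L}(\mathcal{P})=\bigcup_i\mathcal{L}(T_i)$; internal vertices of distinct trees are disjoint, while leaves with the same label are the same vertex. The display graph $G(\mathcal{P})$ has vertex set $\bigcup_i V(T_i)$ and edge set $\bigcup_i E(T_i)$. For a vertex $u$ of an input tree, $\mathrm{Inc}(u)$ is the set of edges of $G(\mathcal{P})$ incident with $u$. A cut of a connected graph $G$ is $F\subseteq E(G)$ with $G-F$ disconnected; minimal if no proper subset is a cut. Minimal cuts $F,F'$ are parallel if $G-F$ has at most one component $H$ with $E(H)\cap F'\neq\emptyset$. A cut $F$ of $G(\mathcal{P})$ is legal if for every $T\in\mathcal{P}$ there is $u\in V(T)$ with $F\cap E(T)\subseteq\mathrm{Inc}(u)$; nice if legal and every component of $G(\mathcal{P})-F$ contains at least one edge. For a nice minimal cut $F$ with components $G_1,G_2$ of $G(\mathcal{P})-F$, $\sigma(F)=\mathcal{L}(G_1)|\mathcal{L}(G_2)$, where $\mathcal{L}(G_i)$ is the set of leaves in $G_i$; this is a bipartition of $\mathcal{L}(\mathcal{P})$ into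 nonempty sets (a split). Two splits $A_1|A_2$ and $B_1|B_2$ are compatible if some phylogenetic tree displays both, equivalently if at least one of $A_i\cap B_j$ ($i,j\in\{1,2\}$) is empty. *)

(* Graphs over a finite ambient vertex type V;
   an edge is a 2-element subset of V. *)
From mathcomp Require Import all_boot.
Set Implicit Arguments. Unset Strict Implicit. Unset Printing Implicit Defensive.

Section Defs.
Variable V : finType.

Definition adj (W : {set V}) (E : {set {set V}}) : rel V :=
  fun x y => [&& x \in W, y \in W, x != y & [set x; y] \in E].

Definition connectedb (W : {set V}) (E : {set {set V}}) : bool :=
  [forall x in W, forall y in W, connect (adj W E) x y].

Definition comp (W : {set V}) (E : {set {set V}}) (x : V) : {set V} :=
  [set y in W | connect (adj W E) x y].

Definition inner_edges (E : {set {set V}}) (H : {set V}) : {set {set V}} :=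
  [set e in E | e \subset H].

Definition deg (E : {set {set V}}) (v : V) : nat := #|[set e in E | v \in e]|.

Definition Inc (E : {set {set V}}) (u : V) : {set {set V}} := [set e in E | u \in e].

(* unrooted phylogenetic tree: a (nonempty, simple) tree whose vertices of
   degree >= 2 (internal vertices) have degree >= 3 *)
Definition is_phylo_tree (VT : {set V}) (ET : {set {set V}}) : Prop :=
  [/\ VT != set0,
      (forall e, e \in ET -> (e \subset VT) && (#|e| == 2)),
      connectedb VT ET,
      (forall e, e \in ET -> ~~ connectedb VT (ET :\ e)) (* acyclic *)
    & (forall v, v \in VT -> deg ET v != 2)].

Definition leaves (VT : {set V}) (ET : {set {set V}}) : {set V} :=
  [set v in VT | deg ET v <= 1].

Definition is_profile (k : nat) (VT : 'I_k -> {set V}) (ET : 'I_k -> {set {set V}}) : Prop :=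
  (forall i, is_phylo_tree (VT i) (ET i)) /\
  (forall i j, i != j ->
     VT i :&: VT j \subset leaves (VT i) (ET i) :&: leaves (VT j) (ET j)).

Definition dgV (k : nat) (VT : 'I_k -> {set V}) : {set V} := \bigcup_i VT i.
Definition dgE (k : nat) (ET : 'I_k -> {set {set V}}) : {set {set V}} := \bigcup_i ET i.
Definition profile_leaves (k : nat) (VT : 'I_k -> {set V}) (ET : 'I_k -> {set {set V}})
  : {set V} := \bigcup_i leaves (VT i) (ET i).

Definition is_cut (W : {set V}) (E F : {set {set V}}) : Prop :=
  F \subset E /\ ~~ connectedb W (E :\: F).

Definition is_minimal_cut (W : {set V}) (E F : {set {set V}}) : Prop :=
  is_cut W E F /\ (forall F' : {set {set V}}, F' \proper F -> ~ is_cut W E F').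

Definition parallel (W : {set V}) (E F F' : {set {set V}}) : Prop :=
  forall x y, x \in W -> y \in W ->
    inner_edges (E :\: F) (comp W (E :\: F) x) :&: F' != set0 ->
    inner_edges (E :\: F) (comp W (E :\: F) y) :&: F' != set0 ->
    comp W (E :\: F) x = comp W (E :\: F) y.

Definition legal (k : nat) (VT : 'I_k -> {set V}) (ET : 'I_k -> {set {set V}})
  (F : {set {set V}}) : Prop :=
  forall i, exists2 u, u \in VT i & F :&: ET i \subset Inc (dgE ET) u.

Definition nice (k : nat) (VT : 'I_k -> {set V}) (ET : 'I_k -> {set {set V}})
  (F : {set {set V}}) : Prop :=
  [/\ is_cut (dgV VT) (dgE ET) F, legal VT ET F &
      forall x, x \in dgV VT ->
        inner_edges (dgE ET :\: F) (comp (dgV VT) (dgE ET :\: F) x) != set0].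

Definition sigma (k : nat) (VT : 'I_k -> {set V}) (ET : 'I_k -> {set {set V}})
  (F : {set {set V}}) : {set {set V}} :=
  [set profile_leaves VT ET :&: comp (dgV VT) (dgE ET :\: F) x | x in dgV VT].

Definition compatible (S1 S2 : {set {set V}}) : Prop :=
  exists A B, [/\ A \in S1, B \in S2 & A :&: B = set0].

End Defs.

From Pilot Require Import Defs.
From mathcomp Require Import all_boot.

(* Since F1 is a cut, G - F1 has at least two components, and as F1 and F2
   are parallel at most one of them contains an edge of F2.  Any other
   component C1 therefore stays connected in G - F2, so it lies inside a
   single component C2 of G - F2; since F2 is a cut, G - F2 has a further
   component D2, disjoint from C2.  The part of sigma(F1) read off C1 and the
   part of sigma(F2) read off D2 are then disjoint. *)

Set Implicit Arguments.
Unset Strict Implicit.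
Unset Printing Implicit Defensive.

Section Components.
Variables (V : finType) (W : {set V}).
Implicit Types (E : {set {set V}}) (x y : V).

Lemma adj_sym E : symmetric (adj W E).
Proof.
move=> x y; rewrite /adj; apply/and4P/and4P => -[xW yW xy e]; split => //;
  by [rewrite eq_sym | rewrite setUC].
Qed.

Lemma connect_adj_sym E : connect_sym (adj W E).
Proof. exact/sym_connect_sym/adj_sym. Qed.

Lemma mem_comp E x y : (y \in Defs.comp W E x) = (y \in W) && connect (adj W E) x y.
Proof. by rewrite inE. Qed.

Lemma comp_id E x : x \in W -> x \in Defs.comp W E x.
Proof. by move=> xW; rewrite mem_comp xW connect0. Qed.

Lemma disjoint_comp E x y :
  ~~ connect (adj W E) x y -> Defs.comp W E x :&: Defs.comp W E y = set0.
Proof.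
move=> nxy; apply/setP => z; rewrite !inE; apply/negP => /andP [/andP [_ xz] /andP [_ yz]].
by move: nxy; rewrite (connect_trans xz) // connect_adj_sym.
Qed.

Lemma not_connectedbP E :
  ~~ connectedb W E ->
  exists x y, [/\ x \in W, y \in W & ~~ connect (adj W E) x y].
Proof.
rewrite /connectedb negb_forall => /existsP [x].
rewrite negb_imply negb_forall => /andP [xW /existsP [y]].
by rewrite negb_imply => /andP [yW nxy]; exists x, y.
Qed.

Lemma not_connectedb_from E x :
  ~~ connectedb W E -> exists2 y, y \in W & ~~ connect (adj W E) x y.
Proof.
case/not_connectedbP => [u [v [uW vW nuv]]].
have [xu|] := boolP (connect (adj W E) x u); last by exists u.
have [xv|] := boolP (connect (adj W E) x v); last by exists v.
by move: nuv; rewrite (connect_trans _ xv) // connect_adj_sym.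
Qed.

(* Every edge of a path starting at x lies inside the component of x. *)
Lemma comp_subset E1 E2 x :
  inner_edges E1 (Defs.comp W E1 x) \subset E2 -> Defs.comp W E1 x \subset Defs.comp W E2 x.
Proof.
move=> inner12; apply/subsetP => z /[!mem_comp] /andP [zW /connectP [p pth zp]].
rewrite zW zp; suff: forall u, connect (adj W E1) x u -> path (adj W E1) u p ->
    connect (adj W E2) u (last u p) by apply; rewrite ?connect0.
elim: p {pth zW zp} => [|v p IH] u xu /=; first by rewrite connect0.
case/andP=> uv vp; have xv := connect_trans xu (connect1 uv).
apply: connect_trans (IH v xv vp); apply: connect1.
move: uv => /and4P [uW vW uv e]; rewrite /adj uW vW uv /=.
apply: (subsetP inner12); rewrite inE e; apply/subsetP => w.
by rewrite !inE => /orP [] /eqP ->; rewrite ?uW ?vW.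
Qed.

End Components.

Lemma parallel_comp_free (V : finType) (W : {set V}) (E F1 F2 : {set {set V}}) :
  is_cut W E F1 -> parallel W E F1 F2 ->
  exists2 x, x \in W & inner_edges (E :\: F1) (Defs.comp W (E :\: F1) x) :&: F2 = set0.
Proof.
move=> [_ cutF1] par; have [a [b [aW bW nab]]] := not_connectedbP cutF1.
have [Ha|Ha] := eqVneq (inner_edges (E :\: F1) (Defs.comp W (E :\: F1) a) :&: F2) set0.
  by exists a.
have [Hb|Hb] := eqVneq (inner_edges (E :\: F1) (Defs.comp W (E :\: F1) b) :&: F2) set0.
  by exists b.
have := comp_id (E :\: F1) bW; rewrite -(par a b aW bW Ha Hb) mem_comp.
by rewrite bW (negbTE nab).
Qed.

Lemma inner_edges_setD_subset (V : finType) (E F1 F2 : {set {set V}}) (H : {set V}) :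
  inner_edges (E :\: F1) H :&: F2 = set0 -> inner_edges (E :\: F1) H \subset E :\: F2.
Proof.
move=> free; apply/subsetP => e eH; have /setIdP [/setDP [eE _] _] := eH.
rewrite inE eE andbT; apply/negP => eF2.
by have := in_set0 e; rewrite -free inE eH eF2.
Qed.

Theorem lemma11 (V : finType) (k : nat)
    (VT : 'I_k -> {set V}) (ET : 'I_k -> {set {set V}})
    (F1 F2 : {set {set V}}) :
  is_profile VT ET ->
  connectedb (dgV VT) (dgE ET) ->
  nice VT ET F1 -> is_minimal_cut (dgV VT) (dgE ET) F1 ->
  nice VT ET F2 -> is_minimal_cut (dgV VT) (dgE ET) F2 ->
  parallel (dgV VT) (dgE ET) F1 F2 ->
  compatible (sigma VT ET F1) (sigma VT ET F2).
Proof.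
move=> _ _ [cutF1 _ _] _ [[_ cutF2] _ _] _ par.
set W := dgV VT; set E := dgE ET; set L := profile_leaves VT ET.
have [x xW free] := parallel_comp_free cutF1 par.
have [y yW nxy] := not_connectedb_from x cutF2.
have sub12 := comp_subset (inner_edges_setD_subset free).
exists (L :&: Defs.comp W (E :\: F1) x), (L :&: Defs.comp W (E :\: F2) y); split.
- by apply/imsetP; exists x.
- by apply/imsetP; exists y.
apply/setP => z; rewrite inE in_set0; apply/negP => /andP [/setIP [_ z1] /setIP [_ z2]].
have : z \in Defs.comp W (E :\: F2) x :&: Defs.comp W (E :\: F2) y.
  by rewrite inE (subsetP sub12 _ z1) z2.
by rewrite disjoint_comp // in_set0.
Qed.
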